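(* Let $A$ be a finite set of alternatives with $|A|\ge 3$, let $N=\{1,\dots,n\}$ with $n\ge 2$, and let $\mathbb{D}$ be a minimally rich domain of linear orders over $A$ that is connected with two distinct neighbours. If $f:\mathbb{D}^n\to A$ is unanimous and strategy-proof, then $f$ satisfies dictatorship.
   Context: A domain is a set $\mathbb{D}$ of linear orders (strict preferences) over $A$; a preference profile is $P=(P_1,\dots,P_n)\in\mathbb{D}^n$. For a linear order $P_i$, $r_k(P_i)$ is its $k$-th ranked alternative. $\mathbb{D}$ is minimally rich if every $a\in A$ is ranked first in some $P_i\in\mathbb{D}$. Two linear orders $P_i,P_i'$ are adjacent if $P_i'$ is obtained from $P_i$ by swapping two consecutively ranked alternatives and leaving all other ranks unchanged. A social choice function (scf) is a map $f:\mathbb{D}^n\to A$. It is unanimous if $f(P)=a$ whenever every voter ranks $a$ first. It is strategy-proof if there is no voter $i$, profile $P$, and $P_i'\in\mathbb{D}$ with $f(P_i',P_{-i})\,P_i\,f(P_i,P_{-i})$. It satisfies dictatorship if there is a voter $i$ with $f(P)=r_1(P_i)$ for all $P\in\mathbb{D}^n$. A path in $\mathbb{D}$ is a sequence of distinct preferences in $\mathbb{D}$ in which consecutive ones are adjacent; $\mathbb{D}$ is connected if any two of its preferences are joined by a path in $\mathbb{D}$. For $\bar{\mathbb{D}}\subseteq\mathbb{D}$, a neighbour of $\bar{\mathbb{D}}$ in $\mathbb{D}$ is a $P_i\in\mathbb{D}\setminus\bar{\mathbb{D}}$ adjacent to some element of $\bar{\mathbb{D}}$. Two preferences $P_i,P_i'\in\mathbb{D}$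 are top-connected in $\mathbb{D}$ if there is a path from $P_i$ to $P_i'$ in $\mathbb{D}$ all of whose members have the same top-ranked alternative. The top-connected closure $\mathbb{D}^{TCC}(P_i)$ is the set of preferences in $\mathbb{D}$ top-connected to $P_i$, together with $P_i$. $\mathbb{D}$ is connected with two distinct neighbours if (1) $\mathbb{D}$ is connected, and (2) for every $P_i\in\mathbb{D}$ there exist two neighbours $P_i',P_i''$ of $\mathbb{D}^{TCC}(P_i)$ in $\mathbb{D}$ with $r_1(P_i')\ne r_1(P_i'')$. *)

From mathcomp Require Import all_boot.
Set Implicit Arguments. Unset Strict Implicit. Unset Printing Implicit Defensive.

(* A linear order (strict preference) over a finite set A of alternatives is
   represented by its ranking: an injective (hence bijective) map
   r : 'I_#|A| -> A, where r k is the (k+1)-th ranked alternative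
   (ranks are 0-indexed: r 0 is the top alternative). *)
Definition linord (A : finType) := {f : {ffun 'I_#|A| -> A} | injectiveb f}.

Section Prefs.
Variable A : finType.
Implicit Types P Q : linord A.

Definition rk P (k : 'I_#|A|) : A := (val P) k.

Definition prefers P (a b : A) : bool :=
  [exists i : 'I_#|A|, exists j : 'I_#|A|, [&& i < j, rk P i == a & rk P j == b]].

Definition is_top P (a : A) : bool :=
  [exists i : 'I_#|A|, (val i == 0) && (rk P i == a)].

Definition adjacent P Q : bool :=
  [exists k : 'I_#|A|, exists k' : 'I_#|A|,
     [&& val k' == (val k).+1, rk Q k == rk P k', rk Q k' == rk P k &
         [forall j : 'I_#|A|, ((j != k) && (j != k')) ==> (rk Q j == rk P j)]]].

Definition is_path_in (D : {set linord A}) (s : seq (linord A)) P Q : Prop :=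
  [/\ head P s = P, last P s = Q, uniq s, all (fun x => x \in D) s &
      path adjacent P (behead s)] /\ s != [::].

Definition dom_connected (D : {set linord A}) : Prop :=
  forall P Q, P \in D -> Q \in D -> exists s, is_path_in D s P Q.

Definition top_connected (D : {set linord A}) P Q : Prop :=
  exists s, [/\ is_path_in D s P Q &
    exists a, all (fun x => is_top x a) s].

Definition TCC (D : {set linord A}) P : linord A -> Prop :=
  fun Q => Q = P \/ top_connected D P Q.

Definition neighbour (D : {set linord A}) (Dbar : linord A -> Prop) Q : Prop :=
  [/\ Q \in D, ~ Dbar Q & exists R, Dbar R /\ adjacent R Q].

Definition connected_two_neighbours (D : {set linord A}) : Prop :=
  dom_connected D /\
  forall P, P \in D -> exists Q1 Q2 a1 a2,
    [/\ neighbour D (TCC D P) Q1, neighbour D (TCC D P) Q2,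
        is_top Q1 a1, is_top Q2 a2 & a1 <> a2].

Definition minimally_rich (D : {set linord A}) : Prop :=
  forall a : A, exists P, P \in D /\ is_top P a.

End Prefs.

Section SCF.
Variables (A : finType) (n : nat) (D : {set linord A}).

Definition profile := 'I_n -> linord A.
Definition in_dom (P : profile) : Prop := forall i, P i \in D.

Definition unanimous (f : profile -> A) : Prop :=
  forall P a, in_dom P -> (forall i, is_top (P i) a) -> f P = a.

Definition update (P : profile) (i : 'I_n) (Q : linord A) : profile :=
  fun j => if j == i then Q else P j.

Definition strategy_proof (f : profile -> A) : Prop :=
  forall P i Q, in_dom P -> Q \in D ->
    ~ prefers (P i) (f (update P i Q)) (f P).

Definition dictatorship (f : profile -> A) : Prop :=
  exists i : 'I_n, forall P, in_dom P -> is_top (P i) (f P).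
End SCF.

From mathcomp Require Import all_boot zify.
From Stdlib Require Import FunctionalExtensionality Classical_Prop.

(* Call alternatives a and b linked when D contains adjacent
   preferences with tops a and b. The two-neighbour condition gives every
   alternative two distinct linked ones, and connectedness of D makes this graph
   connected. For a unanimous strategy-proof two-voter rule, the outcome at a
   profile whose tops form a link is one of the two tops, the same one for all
   such profiles, so each link is won by one of the voters. A link won by voter 1
   passes the win on to every link leaving its far end other than the way back.
   Fix a report of voter 2 with top b: links won by voter 1 that end outside the
   set of outcomes voter 1 can then reach keep this property along
   non-backtracking walks, and such a walk closes up in a finite graph, bringing
   the property back to a link ending at the reachable b. So two links into b
   cannot be won by different voters; hence one voter wins all links and is a
   dictator.
   With n + 2 voters, merging voters 0 and 1 gives a unanimous strategy-proof rule
   for n + 1 voters, which has a dictator by induction. If it is not the merged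
   voter, it also dictates the original rule. Otherwise, for fixed reports of the
   others, voters 0 and 1 form a two-voter rule with a dictator, and which of them
   it is cannot change when another voter changes her report: she could then move
   the outcome from a lower alternative to her top. *)

Set Implicit Arguments. Unset Strict Implicit. Unset Printing Implicit Defensive.

Section NonBacktrackingWalks.
Variables (T : finType) (e r : rel T).
Hypothesis e_sym : symmetric e.
Hypothesis r_sub : subrel r e.
Hypothesis r_forward : forall u v w, r u v -> e v w -> w != u -> r v w.
Hypothesis e_branch : forall u v, exists2 w, e v w & w != u.

(* Walks are stored backwards: the head is the vertex reached last. *)
Let r_rev := [rel a b | r b a].

Lemma walk_back t x v w : uniq (x :: t) -> v \notin t -> path r_rev x t ->
  w \in x :: t -> r v w -> exists z, r z (last x t).
Proof.
elim: t x v w => [|p t IH] x v w.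
  by move=> _ _ _; rewrite mem_seq1 => /eqP-> vx; exists v.
move=> /andP[xpt upt]; rewrite inE negb_or => /andP[vp vt] /= /andP[px pt].
case/predU1P => [->|wt] vw; last exact: IH wt vw.
have xp : r x p by apply: r_forward vw _ _; rewrite 1?eq_sym // e_sym r_sub.
by apply: (IH p x p); rewrite ?mem_head //; move: xpt; rewrite inE negb_or => /andP[].
Qed.

Lemma walk_step v u t : uniq [:: v, u & t] -> path r_rev v (u :: t) ->
  (exists z, r z (last u t)) \/
  exists2 w, uniq [:: w, v, u & t] & path r_rev w [:: v, u & t].
Proof.
move=> uvt pvt; have [w vw wu] := e_branch u v.
have vw' : r v w by apply: r_forward vw wu; case/andP: pvt.
have [wvt|wvt] := boolP (w \in [:: v, u & t]).
  by left; have /andP[vut _] := uvt; exact: (walk_back uvt vut pvt wvt vw').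
by right; exists w; rewrite /= ?wvt ?vw'.
Qed.

Lemma walk_closes k v u t : #|T| <= size t + k -> uniq [:: v, u & t] ->
  path r_rev v (u :: t) -> exists z, r z (last u t).
Proof.
elim: k v u t => [|k IH] v u t lek uvt pvt; case: (walk_step uvt pvt) => // -[w wvut pw].
  by move: (max_card (mem [:: w, v, u & t])) lek; rewrite (card_uniqP wvut) /=; lia.
by apply: IH pw; rewrite //= addSnnS.
Qed.

Lemma nonbacktracking_pred b y : r b y -> exists z, r z b.
Proof.
move=> rby; have [yb|yb] := eqVneq y b; first by subst y; exists b.
apply: (@walk_closes #|T| y b [::]) => //=; first by rewrite inE yb.
by rewrite andbT.
Qed.

End NonBacktrackingWalks.

Section ProfileUpdate.
Variables (A : finType) (n : nat) (D : {set linord A}).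
Implicit Types (P : profile A n) (i j : 'I_n) (Q R : linord A).

Lemma update_eq P i Q : update P i Q i = Q.
Proof. by rewrite /update eqxx. Qed.

Lemma update_neq P i j Q : j != i -> update P i Q j = P j.
Proof. by rewrite /update => /negbTE->. Qed.

Lemma update_id P i : update P i (P i) = P.
Proof. by apply: functional_extensionality => j; rewrite /update; case: eqP => [->|]. Qed.

Lemma update_update P i Q R : update (update P i Q) i R = update P i R.
Proof. by apply: functional_extensionality => j; rewrite /update; case: eqP. Qed.

Lemma update_comm P i j Q R : i != j ->
  update (update P i Q) j R = update (update P j R) i Q.
Proof.
move=> ij; apply: functional_extensionality => k; rewrite /update.
by case: eqP => [->|//]; rewrite eq_sym (negbTE ij).
Qed.

Lemma in_dom_update P i Q : in_dom D P -> Q \in D -> in_dom D (update P i Q).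
Proof. by move=> PD QD j; rewrite /update; case: eqP. Qed.

Lemma in_dom_update_ind (Pr : profile A n -> Prop) :
  (forall P i Q, in_dom D P -> Q \in D -> Pr P -> Pr (update P i Q)) ->
  forall P P', in_dom D P -> in_dom D P' -> Pr P -> Pr P'.
Proof.
move=> Pr_update P P' PD P'D PrP.
pose F s := foldr (fun i P => update P i (P' i)) P s.
have FE s j : F s j = if j \in s then P' j else P j.
  elim: s => //= i s IH; rewrite inE /update IH.
  by case: eqP => [->|]; rewrite ?eqxx.
have F_dom s : in_dom D (F s) by move=> j; rewrite FE; case: ifP.
have <- : F (enum 'I_n) = P' by apply: functional_extensionality => j; rewrite FE mem_enum.
by elim: (enum _) => //= i s; apply: Pr_update.
Qed.

End ProfileUpdate.

Section Dictatorship.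
Variable A : finType.
Implicit Types (P Q R : linord A) (x y z : A).

Lemma rk_inj P : injective (rk P).
Proof. exact/injectiveP/(valP P). Qed.

Lemma rk_onto P x : exists i, rk P i == x.
Proof.
have := inj_card_onto (@rk_inj P); rewrite card_ord leqnn.
by move=> /(_ isT x) /codomP[i ->]; exists i.
Qed.

Definition pos P x : 'I_#|A| := xchoose (rk_onto P x).

Lemma rk_pos P x : rk P (pos P x) = x.
Proof. exact/eqP/(xchooseP (rk_onto P x)). Qed.

Lemma pos_rk P i : pos P (rk P i) = i.
Proof. by apply: (@rk_inj P); rewrite rk_pos. Qed.

Lemma pos_inj P : injective (pos P).
Proof. by move=> x y e; rewrite -(rk_pos P x) e rk_pos. Qed.

Lemma prefersE P x y : prefers P x y = (pos P x < pos P y).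
Proof.
apply/existsP/idP => [[i /existsP[j /and3P[ij /eqP<- /eqP<-]]]|xy].
  by rewrite !pos_rk.
by exists (pos P x); apply/existsP; exists (pos P y); rewrite xy !rk_pos !eqxx.
Qed.

Lemma prefers_total P x y : x != y -> prefers P x y = ~~ prefers P y x.
Proof.
move=> xy; have : pos P x != pos P y :> nat by rewrite val_eqE (inj_eq (@pos_inj P)).
by rewrite !prefersE; lia.
Qed.

Lemma not_prefers_trans P x y z :
  ~~ prefers P y x -> ~~ prefers P z y -> ~~ prefers P z x.
Proof. rewrite !prefersE -!leqNgt; exact: leq_trans. Qed.

Lemma not_prefers_antisym P x y : ~~ prefers P x y -> ~~ prefers P y x -> x = y.
Proof. by case: (eqVneq x y) => // xy; rewrite prefers_total // => /negbNE->. Qed.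

Definition swap_ranks (k m : nat) : nat :=
  if m == k then k.+1 else if m == k.+1 then k else m.

Lemma swap_ranks_flip k a b :
  a < b -> swap_ranks k b < swap_ranks k a -> a = k /\ b = k.+1.
Proof. by rewrite /swap_ranks; do 4?case: eqP; lia. Qed.

Lemma adjacent_pos P Q : adjacent P Q ->
  exists k, forall x, pos Q x = swap_ranks k (pos P x) :> nat.
Proof.
case/existsP=> k /existsP[k' /and4P[/eqP k'E /eqP Qk /eqP Qk' /forallP Qj]].
exists k => x; rewrite /swap_ranks.
have [Px|Pxk] := eqVneq (pos P x) k.
  have Qx : pos Q x = k' by rewrite -(pos_rk Q k') Qk' -Px rk_pos.
  by rewrite Qx Px eqxx.
have [Px|Pxk'] := eqVneq (pos P x) k'.
  have Qx : pos Q x = k by rewrite -(pos_rk Q k) Qk -Px rk_pos.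
  by rewrite Qx Px k'E eqxx; case: eqP => //; lia.
have Qx : pos Q x = pos P x.
  by rewrite -{1}(rk_pos P x) -(eqP (implyP (Qj _) _)) ?Pxk ?Pxk' // pos_rk.
by rewrite Qx val_eqE (negbTE Pxk) -k'E val_eqE (negbTE Pxk').
Qed.

Lemma adjacent_sym P Q : adjacent P Q -> adjacent Q P.
Proof.
case/existsP=> k /existsP[k' /and4P[k'E /eqP Qk /eqP Qk' /forallP Qj]].
apply/existsP; exists k; apply/existsP; exists k'.
rewrite k'E Qk Qk' !eqxx; apply/forallP=> j; apply/implyP=> jkk'.
by rewrite eq_sym (implyP (Qj j)).
Qed.

Variable A_gt0 : 0 < #|A|.

Definition top P : A := rk P (Ordinal A_gt0).

Lemma pos_eq0 P x : (pos P x == 0 :> nat) = (x == top P).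
Proof. by rewrite -[x in RHS](rk_pos P) (inj_eq (@rk_inj P)) -val_eqE. Qed.

Lemma pos_top P : pos P (top P) = 0 :> nat.
Proof. by apply/eqP; rewrite pos_eq0. Qed.

Lemma is_topP P a : reflect (top P = a) (is_top P a).
Proof.
apply: (iffP existsP) => [[i /andP[/eqP i0 /eqP<-]]|<-].
  by congr (rk P _); apply: val_inj.
by exists (Ordinal A_gt0); rewrite !eqxx.
Qed.

Lemma prefers_top P x : x != top P -> prefers P (top P) x.
Proof.
by rewrite -pos_eq0 prefersE pos_top lt0n.
Qed.

Lemma adjacent_top_swap R Q : adjacent R Q -> top R != top Q ->
  forall x, pos Q x = swap_ranks 0 (pos R x) :> nat.
Proof.
by case/adjacent_pos=> -[//|k] Qx; rewrite -pos_eq0 Qx pos_top.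
Qed.

Lemma adjacent_top_second R Q z : adjacent R Q -> top R != top Q ->
  z != top R -> z != top Q -> prefers Q (top R) z.
Proof.
move=> RQ tRQ; rewrite -!pos_eq0 prefersE !(adjacent_top_swap RQ tRQ) pos_top.
by move: (val (pos R z)) => m; rewrite /swap_ranks /=; do ?case: eqP; lia.
Qed.

Lemma adjacent_top_flip R Q x y : adjacent R Q -> top R != top Q ->
  prefers R x y -> prefers Q y x -> x = top R /\ y = top Q.
Proof.
move=> RQ tRQ; rewrite !prefersE !(adjacent_top_swap RQ tRQ).
move=> xy /(swap_ranks_flip xy)[Rx Ry].
have Qy : pos Q y = 0 :> nat by rewrite (adjacent_top_swap RQ tRQ) Ry.
by split; apply/eqP; rewrite -pos_eq0; apply/eqP.
Qed.

Section TopGraph.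
Variable D : {set linord A}.
Hypothesis D_rich : minimally_rich D.
Hypothesis D_conn : connected_two_neighbours D.

Lemma exists_top a : exists P, (P \in D) && (top P == a).
Proof. by have [P [PD /is_topP tP]] := D_rich a; exists P; rewrite PD tP eqxx. Qed.

Definition rep a : linord A := xchoose (exists_top a).

Lemma rep_in a : rep a \in D.
Proof. by case/andP: (xchooseP (exists_top a)). Qed.

Lemma top_rep a : top (rep a) = a.
Proof. by case/andP: (xchooseP (exists_top a)) => _ /eqP. Qed.

Definition top_edge : rel A := fun u v =>
  [exists R in D, exists Q in D,
     [&& adjacent R Q, top R != top Q, top R == u & top Q == v]].

Lemma top_edgeP u v : reflect
  (exists2 R, R \in D & exists2 Q, Q \in D &
     [/\ adjacent R Q, top R != top Q, top R = u & top Q = v])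
  (top_edge u v).
Proof.
apply: (iffP exists_inP) => [[R RD /exists_inP[Q QD /and4P[RQ tRQ /eqP tR /eqP tQ]]]|].
  by exists R => //; exists Q.
case=> R RD [Q QD [RQ tRQ tR tQ]]; exists R => //; apply/exists_inP; exists Q => //.
by rewrite RQ tRQ tR tQ !eqxx.
Qed.

Lemma top_edge_neq u v : top_edge u v -> u != v.
Proof. by case/top_edgeP=> R _ [Q _ [_ tRQ <- <-]]. Qed.

Lemma top_edge_sym : symmetric top_edge.
Proof.
suff edge_sym u v : top_edge u v -> top_edge v u.
  by move=> u v; apply/idP/idP; apply: edge_sym.
case/top_edgeP=> R RD [Q QD [RQ tRQ tR tQ]]; apply/top_edgeP.
by exists Q => //; exists R; rewrite 1?eq_sym // adjacent_sym.
Qed.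

Lemma TCCP P Q : P \in D -> TCC D P Q <->
  exists p, [/\ path (@adjacent A) P p,
                all (fun R => (R \in D) && (top R == top P)) p & last P p = Q].
Proof.
move=> PD; split.
  case=> [->|[s [[[sP sQ _ sD sp] s0] [a sa]]]]; first by exists [::].
  case: s sP sQ sD sp s0 sa => // R p /= -> <- /andP[_ pD] pp _ /andP[Pa pa].
  exists p; split=> //; apply/allP=> S Sp; rewrite (allP pD) //=.
  by move: (allP pa S Sp) Pa => /is_topP-> /is_topP->.
case=> p [pp pD <-]; case/shortenP: pp => -[|R p'] pp' up' p'p; [by left | right].
exists [:: P, R & p']; split; [split=> //; split=> // | exists (top P)].
  apply/allP=> S; rewrite inE => /predU1P[->//|/p'p /(allP pD) /andP[]//].
apply/allP=> S; rewrite inE.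
by case/predU1P=> [->|/p'p /(allP pD) /andP[_ /eqP tS]]; apply/is_topP.
Qed.

Lemma TCC_top P R : P \in D -> TCC D P R -> (R \in D) && (top R == top P).
Proof.
move=> PD /(TCCP _ PD)[p [_ pD <-]].
by have := mem_last P p; rewrite inE => /predU1P[->|/(allP pD)//]; rewrite PD eqxx.
Qed.

Lemma neighbour_top_edge P Q : P \in D -> neighbour D (TCC D P) Q ->
  top_edge (top P) (top Q).
Proof.
move=> PD [QD QnT [R [RT RQ]]]; have /andP[RD /eqP tR] := TCC_top PD RT.
apply/top_edgeP; exists R => //; exists Q => //; split=> //; rewrite tR.
apply/eqP=> tQ; apply: QnT; apply/(TCCP _ PD).
move/(TCCP _ PD): RT => [p [pp pD pR]]; exists (rcons p Q).
by rewrite rcons_path all_rcons last_rcons pp pD pR RQ QD tQ eqxx.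
Qed.

Lemma top_edge_branch u v : exists2 w, top_edge v w & w != u.
Proof.
have [Q1 [Q2 [a1 [a2 [N1 N2 /is_topP t1 /is_topP t2 a12]]]]] := D_conn.2 _ (rep_in v).
have := neighbour_top_edge (rep_in v) N1; have := neighbour_top_edge (rep_in v) N2.
rewrite top_rep t1 t2 => e2 e1; have [a1u|] := eqVneq a1 u; last by exists a1.
by exists a2; rewrite // -a1u eq_sym; apply/eqP.
Qed.

Lemma top_edge_ind (Pr : A -> Prop) :
  (forall u v, top_edge u v -> Pr u -> Pr v) -> forall u v, Pr u -> Pr v.
Proof.
move=> Pr_edge u v; rewrite -(top_rep u) -(top_rep v).
have [s [[su sv _ sD sp] s0]] := D_conn.1 _ _ (rep_in u) (rep_in v).
case: s s0 su sv sD sp => // P p _ /= <- <- /andP[PD pD] pp.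
elim: p P PD pD pp => //= R p IH P PD /andP[RD pD] /andP[PR pp] PrP.
apply: IH (RD) pD pp _; have [<-//|tPR] := eqVneq (top P) (top R).
by apply: Pr_edge PrP; apply/top_edgeP; exists P => //; exists R => //; split.
Qed.

Section TwoVoters.
Variable g : linord A -> linord A -> A.
Hypothesis g_unanimous : forall P, P \in D -> g P P = top P.
Hypothesis g_sp_l : forall P1 P1' P2, P1 \in D -> P1' \in D -> P2 \in D ->
  ~~ prefers P1 (g P1' P2) (g P1 P2).
Hypothesis g_sp_r : forall P1 P2 P2', P1 \in D -> P2 \in D -> P2' \in D ->
  ~~ prefers P2 (g P1 P2') (g P1 P2).

Lemma g_top_l P1 P1' P2 : P1 \in D -> P1' \in D -> P2 \in D ->
  g P1' P2 = top P1 -> g P1 P2 = top P1.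
Proof.
move=> P1D P1'D P2D e; apply/eqP; apply: contraNT (g_sp_l P1D P1'D P2D) => ne.
by rewrite e prefers_top.
Qed.

Lemma g_top_r P1 P2 P2' : P1 \in D -> P2 \in D -> P2' \in D ->
  g P1 P2' = top P2 -> g P1 P2 = top P2.
Proof.
move=> P1D P2D P2'D e; apply/eqP; apply: contraNT (g_sp_r P1D P2D P2'D) => ne.
by rewrite e prefers_top.
Qed.

Lemma g_flip_l R Q P2 : R \in D -> Q \in D -> P2 \in D -> adjacent R Q -> top R != top Q ->
  g R P2 != g Q P2 -> g R P2 = top R /\ g Q P2 = top Q.
Proof.
move=> RD QD P2D RQ tRQ ne; apply: adjacent_top_flip RQ tRQ _ _.
  by rewrite prefers_total // g_sp_l.
by rewrite prefers_total 1?eq_sym // g_sp_l.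
Qed.

Lemma g_flip_r P1 R Q : P1 \in D -> R \in D -> Q \in D -> adjacent R Q -> top R != top Q ->
  g P1 R != g P1 Q -> g P1 R = top R /\ g P1 Q = top Q.
Proof.
move=> P1D RD QD RQ tRQ ne; apply: adjacent_top_flip RQ tRQ _ _.
  by rewrite prefers_total // g_sp_r.
by rewrite prefers_total 1?eq_sym // g_sp_r.
Qed.

Lemma g_on_edge u v P1 P2 : top_edge u v -> P1 \in D -> P2 \in D ->
  top P1 = u -> top P2 = v -> (g P1 P2 == u) || (g P1 P2 == v).
Proof.
case/top_edgeP=> R RD [Q QD [RQ tRQ <- <-]] P1D P2D tP1 tP2.
have [gR|gRQ] := eqVneq (g R P2) (top R).
  by rewrite -tP1 (g_top_l P1D RD P2D) ?tP1 ?eqxx.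
have [gQ|gP1Q] := eqVneq (g P1 Q) (top Q).
  by rewrite -tP2 (g_top_r P1D P2D QD) ?tP2 ?eqxx ?orbT.
have {}gP1Q : g P1 Q = top R.
  apply/eqP; apply: contraTT (g_sp_r P1D QD P1D) => ne.
  by rewrite negbK g_unanimous // tP1 adjacent_top_second.
have {}gRQ : g R P2 = top Q.
  apply/eqP; apply: contraTT (g_sp_l RD P2D P2D) => ne.
  by rewrite negbK g_unanimous // tP2 (adjacent_top_second (adjacent_sym RQ)) // eq_sym.
have := g_top_l RD P1D QD gP1Q; rewrite (g_top_r RD QD P2D) ?tP2 // => e.
by move: tRQ; rewrite e eqxx.
Qed.

Lemma g_edge_const u v P1 P2 P1' P2' : top_edge u v ->
  P1 \in D -> P2 \in D -> P1' \in D -> P2' \in D ->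
  top P1 = u -> top P2 = v -> top P1' = u -> top P2' = v ->
  g P1 P2 = u -> g P1' P2' = u.
Proof.
move=> euv P1D P2D P1'D P2'D tP1 tP2 tP1' tP2' e.
have e' : g P1' P2 = u by rewrite -tP1' (g_top_l P1'D P1D P2D) ?e.
case/orP: (g_on_edge euv P1'D P2'D tP1' tP2') => /eqP // e''.
have := g_top_r P1'D P2D P2'D; rewrite e'' tP2 e' => /(_ erefl) uv.
by move: (top_edge_neq euv); rewrite uv eqxx.
Qed.

Definition left_wins u v := g (rep u) (rep v) == u.

Lemma left_winsE u v P1 P2 : top_edge u v -> P1 \in D -> P2 \in D ->
  top P1 = u -> top P2 = v -> (g P1 P2 == u) = left_wins u v.
Proof.
move=> euv P1D P2D tP1 tP2.
by apply/eqP/eqP; apply: (g_edge_const euv); rewrite ?rep_in ?top_rep.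
Qed.

Lemma left_wins_forward u v w : top_edge u v -> left_wins u v ->
  top_edge v w -> w != u -> left_wins v w.
Proof.
move=> euv luv evw wu; have uv := top_edge_neq euv; have vw := top_edge_neq evw.
case/top_edgeP: (euv) => R1 R1D [Q1 Q1D [RQ1 tRQ1 tR1 tQ1]].
case/top_edgeP: (evw) => R2 R2D [Q2 Q2D [RQ2 tRQ2 tR2 tQ2]].
have gR1R2 : g R1 R2 = u by apply/eqP; rewrite (left_winsE euv).
have gR1Q2 : g R1 Q2 = u.
  have [//|ne] := eqVneq (g R1 Q2) u.
  have ne' : g R1 R2 != g R1 Q2 by rewrite gR1R2 eq_sym.
  have [e _] := g_flip_r R1D R2D Q2D RQ2 tRQ2 ne'.
  by move: uv; rewrite -gR1R2 e tR2 eqxx.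
rewrite -(left_winsE evw Q1D Q2D tQ1 tQ2).
case/orP: (g_on_edge evw Q1D Q2D tQ1 tQ2) => // /eqP e.
have ne : g R1 Q2 != g Q1 Q2 by rewrite gR1Q2 e eq_sym.
have [_ e'] := g_flip_l R1D Q1D Q2D RQ1 tRQ1 ne.
by move: vw; rewrite -e e' tQ1 eqxx.
Qed.

Definition options P2 : {set A} := [set g P1 P2 | P1 in D].

Lemma top_in_options P2 : P2 \in D -> top P2 \in options P2.
Proof. by move=> P2D; apply/imsetP; exists P2; rewrite ?g_unanimous. Qed.

Lemma options_left_wins y P2 : P2 \in D -> top_edge y (top P2) ->
  (y \in options P2) = left_wins y (top P2).
Proof.
move=> P2D e; rewrite -(left_winsE e (rep_in y) P2D (top_rep y)) //.
apply/imsetP/eqP => [[P1 P1D ->]|<-]; last by exists (rep y); rewrite ?rep_in.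
by have := g_top_l (rep_in (g P1 P2)) P1D P2D; rewrite top_rep; apply.
Qed.

Lemma options_edge t x P2 : P2 \in D -> top_edge t x ->
  t \notin options P2 -> x \in options P2 -> ~~ left_wins t x.
Proof.
move=> P2D etx tO /imsetP[P1 P1D ex].
case/top_edgeP: (etx) => R RD [Q QD [RQ tRQ tR tQ]].
have gR : g R P2 = top Q.
  have [//|ne] := eqVneq (g R P2) (top Q).
  have nt : g R P2 != top R.
    by apply: contraNneq tO => e; rewrite -tR -e; apply/imsetP; exists R.
  have := g_sp_l RD P1D P2D; rewrite -ex -tQ.
  by rewrite (adjacent_top_second (adjacent_sym RQ)) // eq_sym.
rewrite -(left_winsE etx RD QD tR tQ) (g_top_r RD QD P2D gR) tQ.
by rewrite eq_sym top_edge_neq.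
Qed.

Lemma left_wins_into b y y' : top_edge y b -> top_edge y' b ->
  left_wins y b -> left_wins y' b.
Proof.
move=> eyb ey'b lyb; apply/negPn/negP => ly'b.
pose P2 := rep b; have P2D : P2 \in D := rep_in b.
have y'O : y' \notin options P2 by rewrite options_left_wins // top_rep.
have y'y : y' != y by apply: contraNneq ly'b => ->.
have eby' : top_edge b y' by rewrite top_edge_sym.
have lby' := left_wins_forward eyb lyb eby' y'y.
pose out := [rel u v | [&& top_edge u v, left_wins u v & v \notin options P2]].
have out_forward u v w : out u v -> top_edge v w -> w != u -> out v w.
  move=> /and3P[euv luv vO] evw wu /=; have lvw := left_wins_forward euv luv evw wu.
  by rewrite evw lvw; apply: contraL lvw; apply: options_edge.
have out_sub : subrel out top_edge by move=> u v /and3P[].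
have out_by' : out b y' by rewrite /= eby' lby'.
have [z /and3P[_ _]] :=
  nonbacktracking_pred top_edge_sym out_sub out_forward top_edge_branch out_by'.
by rewrite -[b in b \notin _]top_rep top_in_options.
Qed.

Lemma left_wins_all u v : top_edge u v -> left_wins u v ->
  forall p q, top_edge p q -> left_wins p q.
Proof.
move=> euv luv p q epq.
pose won b := exists2 y, top_edge y b & left_wins y b.
suff [y eyq lyq] : won q by apply: left_wins_into eyq epq lyq.
apply: (top_edge_ind (Pr := won)) (_ : won v); last by exists u.
move=> b w ebw [y eyb lyb]; have [y0 eby0 y0w] := top_edge_branch w b.
have ly0b : left_wins y0 b by apply: left_wins_into eyb _ lyb; rewrite top_edge_sym.
by exists b => //; apply: left_wins_forward ly0b ebw _; rewrite 1?top_edge_sym // eq_sym.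
Qed.

Lemma left_dictator u v : top_edge u v -> left_wins u v ->
  forall P1 P2, P1 \in D -> P2 \in D -> g P1 P2 = top P1.
Proof.
move=> euv luv P1 P2 P1D P2D.
suff /imsetP[P1' P1'D e] : top P1 \in options P2 by apply: g_top_l P1'D P2D _.
apply/negPn/negP => nO; move: (top_in_options P2D); apply/negP.
apply: (top_edge_ind (Pr := fun x => x \notin options P2)) nO => t x etx tO.
apply/negP => xO; move: (options_edge P2D etx tO xO).
by rewrite (left_wins_all euv luv etx).
Qed.

End TwoVoters.

Lemma two_voter_dictatorship (g : linord A -> linord A -> A) :
  (forall P, P \in D -> g P P = top P) ->
  (forall P1 P1' P2, P1 \in D -> P1' \in D -> P2 \in D ->
     ~~ prefers P1 (g P1' P2) (g P1 P2)) ->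
  (forall P1 P2 P2', P1 \in D -> P2 \in D -> P2' \in D ->
     ~~ prefers P2 (g P1 P2') (g P1 P2)) ->
  (forall P1 P2, P1 \in D -> P2 \in D -> g P1 P2 = top P1) \/
  (forall P1 P2, P1 \in D -> P2 \in D -> g P1 P2 = top P2).
Proof.
move=> gU g_l g_r; case/card_gt0P: A_gt0 => a _; have [b eab _] := top_edge_branch a a.
have [lab|lab] := boolP (left_wins g a b); first by left; apply: left_dictator lab.
right=> P1 P2 P1D P2D; pose g' P Q := g Q P.
apply: (@left_dictator g' _ _ _ b a _ _ P2 P1) => //.
- by move=> *; apply: g_r.
- by move=> *; apply: g_l.
- by rewrite top_edge_sym.
have := g_on_edge gU g_l g_r eab (rep_in a) (rep_in b) (top_rep a) (top_rep b).
by move: lab; rewrite /left_wins /g' => /negbTE->.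
Qed.

Section MergeVoters.
Variable n : nat.

Let v1 : 'I_n.+2 := lift ord0 ord0.

Lemma v1_neq0 : v1 != ord0.
Proof. by rewrite eq_sym neq_lift. Qed.

(* Voters 0 and 1 both report Q 0, and voter i + 1 reports Q i. *)
Definition merge01 (Q : profile A n.+1) : profile A n.+2 :=
  fun i => Q (odflt ord0 (unlift ord0 i)).

Lemma merge01_0 (Q : profile A n.+1) : merge01 Q ord0 = Q ord0.
Proof. by rewrite /merge01 unlift_none. Qed.

Lemma merge01_lift (Q : profile A n.+1) j : merge01 Q (lift ord0 j) = Q j.
Proof. by rewrite /merge01 liftK. Qed.

Lemma in_dom_merge01 (Q : profile A n.+1) : in_dom D Q -> in_dom D (merge01 Q).
Proof. by move=> QD i; apply: QD. Qed.

Lemma merge01_update_lift (Q : profile A n.+1) j R : j != ord0 ->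
  merge01 (update Q j R) = update (merge01 Q) (lift ord0 j) R.
Proof.
move=> j0; apply: functional_extensionality => i; case: (unliftP ord0 i) => [k ->|->].
  by rewrite merge01_lift /update (inj_eq lift_inj) merge01_lift.
by rewrite merge01_0 !update_neq ?merge01_0 ?neq_lift // eq_sym.
Qed.

Lemma merge01_update0 (Q : profile A n.+1) R :
  merge01 (update Q ord0 R) = update (update (merge01 Q) ord0 R) v1 R.
Proof.
apply: functional_extensionality => i; case: (unliftP ord0 i) => [k ->|->].
  have [->|k0] := eqVneq k ord0; first by rewrite merge01_lift !update_eq.
  by rewrite merge01_lift !update_neq ?merge01_lift // 1?eq_sym ?neq_lift.
by rewrite merge01_0 /update eqxx; case: (_ == _).
Qed.

Lemma merge01_shift (P : profile A n.+2) : merge01 (P \o lift ord0) = update P ord0 (P v1).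
Proof.
apply: functional_extensionality => i; case: (unliftP ord0 i) => [k ->|->].
  by rewrite merge01_lift update_neq // eq_sym neq_lift.
by rewrite merge01_0 update_eq.
Qed.

Variable f : profile A n.+2 -> A.
Hypothesis f_sp : strategy_proof D f.

Lemma merge01_unanimous : unanimous D f -> unanimous D (f \o merge01).
Proof. by move=> fU Q a QD Qa; apply: fU => [|i]; [apply: in_dom_merge01 | apply: Qa]. Qed.

Lemma merge01_sp : strategy_proof D (f \o merge01).
Proof.
move=> Q j R QD RD /=; have mQD := in_dom_merge01 QD.
have [->|j0] := eqVneq j ord0; last first.
  by rewrite merge01_update_lift // -(merge01_lift Q j); apply: f_sp.
rewrite merge01_update0; have s0 := @f_sp (merge01 Q) ord0 R mQD RD.
have s1 := @f_sp (update (merge01 Q) ord0 R) v1 R (in_dom_update ord0 mQD RD) RD.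
rewrite merge01_0 in s0; rewrite update_neq ?v1_neq0 // merge01_lift in s1.
by move/negP: s0 => s0; move/negP: s1 => s1; apply/negP; apply: not_prefers_trans s0 s1.
Qed.

Lemma dictatorship_merge01_lift j : j != ord0 ->
  (forall Q : profile A n.+1, in_dom D Q -> f (merge01 Q) = top (Q j)) -> dictatorship D f.
Proof.
move=> j0 dj; exists (lift ord0 j) => P PD; apply/is_topP.
have PlD : in_dom D (P \o lift ord0) by move=> k; apply: PD.
have e0 : f (update P ord0 (P v1)) = top (P (lift ord0 j)) by rewrite -merge01_shift dj.
have e1 : f (update P v1 (P ord0)) = top (P (lift ord0 j)).
  have -> : update P v1 (P ord0) = merge01 (update (P \o lift ord0) ord0 (P ord0)).
    by rewrite merge01_update0 merge01_shift update_update update_id.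
  by rewrite dj ?update_neq //; apply: in_dom_update.
have s0 := @f_sp P ord0 (P v1) PD (PD v1).
have s1 := @f_sp (update P v1 (P ord0)) v1 (P v1) (in_dom_update v1 PD (PD ord0)) (PD v1).
rewrite update_update update_id !update_eq in s1; rewrite e0 in s0; rewrite e1 in s1.
by move/negP: s0 => s0; move/negP: s1 => s1; apply: not_prefers_antisym s0 s1.
Qed.

Definition slice (P : profile A n.+2) P1 P2 := f (update (update P ord0 P1) v1 P2).

Definition slice_left (P : profile A n.+2) :=
  forall P1 P2, P1 \in D -> P2 \in D -> slice P P1 P2 = top P1.

Section MergedDictator0.
Hypothesis merge01_dict0 :
  forall Q : profile A n.+1, in_dom D Q -> f (merge01 Q) = top (Q ord0).

Lemma slice_unanimous (P : profile A n.+2) R : in_dom D P -> R \in D -> slice P R R = top R.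
Proof.
move=> PD RD; rewrite /slice -(update_update P ord0 (P v1)) -merge01_shift.
rewrite -merge01_update0 merge01_dict0 ?update_eq //.
by apply: in_dom_update => // k; apply: PD.
Qed.

Lemma slice_sp_l (P : profile A n.+2) P1 P1' P2 :
  in_dom D P -> P1 \in D -> P1' \in D -> P2 \in D ->
  ~~ prefers P1 (slice P P1' P2) (slice P P1 P2).
Proof.
move=> PD P1D P1'D P2D; set S := update (update P ord0 P1) v1 P2.
have SD : in_dom D S by apply: in_dom_update => //; apply: in_dom_update.
have := @f_sp S ord0 P1' SD P1'D; rewrite /S update_neq 1?eq_sym ?v1_neq0 // update_eq.
by rewrite (update_comm _ _ _ v1_neq0) update_update => /negP.
Qed.

Lemma slice_sp_r (P : profile A n.+2) P1 P2 P2' :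
  in_dom D P -> P1 \in D -> P2 \in D -> P2' \in D ->
  ~~ prefers P2 (slice P P1 P2') (slice P P1 P2).
Proof.
move=> PD P1D P2D P2'D; set S := update (update P ord0 P1) v1 P2.
have SD : in_dom D S by apply: in_dom_update => //; apply: in_dom_update.
by have := @f_sp S v1 P2' SD P2'D; rewrite /S update_eq update_update => /negP.
Qed.

Lemma slice_dictatorship (P : profile A n.+2) : in_dom D P -> slice_left P \/
  forall P1 P2, P1 \in D -> P2 \in D -> slice P P1 P2 = top P2.
Proof.
move=> PD; apply: two_voter_dictatorship => *;
  [exact: slice_unanimous | exact: slice_sp_l | exact: slice_sp_r].
Qed.

Lemma slice_left_update (P : profile A n.+2) i R : in_dom D P -> R \in D ->
  slice_left P -> slice_left (update P i R).
Proof.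
move=> PD RD lP P1 P2 P1D P2D.
have [->|i0] := eqVneq i ord0; first by rewrite -(lP P1 P2) // /slice update_update.
have [->|i1] := eqVneq i v1.
  by rewrite -(lP P1 P2) // /slice (update_comm _ _ _ v1_neq0) update_update.
case: (slice_dictatorship (in_dom_update i PD RD)) => [-> //|rP]; exfalso.
have [a _ a_ne] := top_edge_branch (top (P i)) (top (P i)).
pose S := update (update P ord0 (rep a)) v1 (rep (top (P i))).
have SD : in_dom D S by apply: in_dom_update (rep_in _); apply: in_dom_update (rep_in _).
have := @f_sp S i R SD RD; rewrite /S !update_neq //.
rewrite -(update_comm _ _ _ i1) -(update_comm _ _ _ i0).
have := rP (rep a) (rep (top (P i))) (rep_in _) (rep_in _).
have := lP (rep a) (rep (top (P i))) (rep_in _) (rep_in _).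
by rewrite /slice => -> ->; rewrite !top_rep prefers_top.
Qed.

Lemma dictatorship_merge01_0 : dictatorship D f.
Proof.
case/card_gt0P: A_gt0 => a _; pose P0 : profile A n.+2 := fun=> rep a.
have P0D : in_dom D P0 by move=> i; apply: rep_in.
have slice_id (P : profile A n.+2) : slice P (P ord0) (P v1) = f P.
  by rewrite /slice !update_id.
have [l0|nl0] := classic (slice_left P0).
  exists ord0 => P PD; apply/is_topP; rewrite -slice_id.
  by rewrite (in_dom_update_ind slice_left_update P0D PD l0).
exists v1 => P PD; apply/is_topP; rewrite -slice_id.
case: (slice_dictatorship PD) => [lP|-> //].
by case: nl0; exact: (in_dom_update_ind slice_left_update PD P0D lP).
Qed.

End MergedDictator0.
End MergeVoters.

Lemma sp_dictatorship n (f : profile A n.+1 -> A) :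
  unanimous D f -> strategy_proof D f -> dictatorship D f.
Proof.
elim: n f => [|n IH] f fU fS.
  exists ord0 => P PD; apply/is_topP/esym; apply: fU => // i.
  by rewrite (ord1 i); apply/is_topP.
have [j dj] := IH _ (merge01_unanimous fU) (merge01_sp fS).
have {}dj (Q : profile A n.+1) : in_dom D Q -> f (merge01 Q) = top (Q j).
  by move=> QD; apply/esym/is_topP/dj.
have [j0|j0] := eqVneq j ord0; last exact: dictatorship_merge01_lift j0 dj.
by apply: dictatorship_merge01_0 => //; rewrite -j0.
Qed.

End TopGraph.

End Dictatorship.

Theorem theorem3 (A : finType) (n : nat) (D : {set linord A})
    (f : ('I_n -> linord A) -> A) :
  3 <= #|A| -> 2 <= n ->
  minimally_rich D -> connected_two_neighbours D ->
  unanimous D f -> strategy_proof D f ->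
  dictatorship D f.
Proof.
move=> A3 n2 D_rich D_conn; case: n f n2 => // n f _.
exact: (sp_dictatorship (leq_trans _ A3) D_rich D_conn).
Qed.
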